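(* Let $0\le\gamma_1<\dots<\gamma_p\le1$, $\boldsymbol\alpha=(\alpha_1,\dots,\alpha_p)\in(0,1)^p$ with $\sum_i\alpha_i=1$, and for each $i$ let $(\gamma_{i,n})_n$ be $[0,1]$-valued with $|\gamma_{i,n}-\gamma_i|=O(1/n)$. Let $\phi_{n,\boldsymbol\alpha,\boldsymbol\gamma_n}(u)=\sum_{i=1}^p\alpha_i\phi_{n,\gamma_{i,n}}(u)$. Then for every $\epsilon>0$ there exists $N\in\mathbb{N}$ such that for all $n\ge N$, $\phi_{n,\boldsymbol\alpha,\boldsymbol\gamma_n}'$ is convex on each of the nonempty intervals $[0,\gamma_1-\epsilon]$, $[\gamma_i+\epsilon,\gamma_{i+1}-\epsilon]$ ($1\le i\le p-1$), and $[\gamma_p+\epsilon,1]$.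
   Context: $[x]$ is the integer part. $\phi_{n,\alpha}(t)=\sum_{j=1+[(n-1)\alpha]}^n\binom{n}{j}t^j(1-t)^{n-j}$, $t\in[0,1]$. *)

From HB Require Import structures.
From mathcomp Require Import all_boot all_order all_algebra.
From mathcomp Require Import all_classical all_reals all_analysis.
Set Implicit Arguments. Unset Strict Implicit. Unset Printing Implicit Defensive.
Import Order.TTheory GRing.Theory Num.Theory.
Local Open Scope ring_scope.

(* phi_{n,g}(t) = sum_{j = 1 + [(n-1) g]}^{n} C(n,j) t^j (1-t)^(n-j).
   The condition  floor((n-1) g) < j  is exactly  j >= 1 + [(n-1) g]. *)
Definition phi (R : realType) (n : nat) (g : R) (t : R) : R :=
  \sum_(0 <= j < n.+1 | Num.floor ((n%:R - 1) * g) < j%:Z)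
     ('C(n, j))%:R * t ^+ j * (1 - t) ^+ (n - j).

Definition phi_mix (R : realType) (p n : nat) (alpha : 'I_p -> R)
    (gam : 'I_p -> nat -> R) (u : R) : R :=
  \sum_(i < p) alpha i * phi n (gam i n) u.

Definition convex_on (R : realType) (a b : R) (f : R -> R) : Prop :=
  forall x y t : R, a <= x <= b -> a <= y <= b -> 0 <= t <= 1 ->
    f (t * x + (1 - t) * y) <= t * f x + (1 - t) * f y.

From HB Require Import structures.
From mathcomp Require Import all_boot all_order all_algebra.
From mathcomp Require Import all_classical all_reals all_analysis.
From mathcomp Require Import ring lra.
Import Order.TTheory GRing.Theory Num.Theory.
Set Implicit Arguments. Unset Strict Implicit. Unset Printing Implicit Defensive.
Local Open Scope ring_scope.

(* For n = m + 1, phi_{n,g} is the upper tail  sum_{j > [m g]} b_{m+1,j}  of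
   the Bernstein basis, and the tail telescopes under differentiation:
   phi_{n,g}' = (m+1) b_{m,[m g]}.  So the derivative of the mixture is the
   nonnegative combination  sum_i alpha_i (m+1) b_{m,k_i}  with
   k_i = [m gamma_{i,m+1}], and it suffices that each  b_{m,k}  be convex.
   The monomial  P = X^k (1-X)^l  satisfies  X(1-X)P' = (k(1-X) - lX)P,
   whence  t^2(1-t)^2 P''(t) >= 0  whenever  (k - (k+l) t)^2 >= k + l.
   Finally  k_i = m gamma_i + O(1)  because  gamma_{i,n} = gamma_i + O(1/n),
   so for large m every t at distance >= eps from all gamma_i satisfies
   (k_i - m t)^2 >= m; the intervals of the theorem are of this kind. *)

Section BernsteinTail.
Variable R : realType.

Definition bernstein (m j : nat) : {poly R} :=
  ('C(m, j))%:R *: ('X^j * (1 - 'X) ^+ (m - j)).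

Lemma horner_bernstein m j t :
  (bernstein m j).[t] = ('C(m, j))%:R * t ^+ j * (1 - t) ^+ (m - j).
Proof. by rewrite /bernstein !hornerE. Qed.

Lemma deriv_bernsteinS m j :
  (bernstein m.+1 j.+1)^`() = m.+1%:R *: (bernstein m j - bernstein m j.+1).
Proof.
rewrite /bernstein derivZ derivM derivXn deriv_exp derivB derivC derivX subSS subnS.
have h1 := mul_bin_diag m.+1 j; have h2 := mul_bin_down m.+1 j.+1.
rewrite /= subSS in h1 h2.
rewrite sub0r mulN1r mulNrn mulrN mulrnAl mulrnAr.
rewrite scalerDr scalerN scalerBr !scalerA -!scalerMnr !scalerMnl.
rewrite -[_ *+ j.+1]mulr_natr -[_ *+ (m - j)]mulr_natr -!natrM h1 h2.
by rewrite [(_ * j.+1)%N]mulnC [('C(m.+1, j.+1) * _)%N]mulnC.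
Qed.

Lemma deriv_bernstein_tail m k : (k <= m)%N ->
  (\sum_(k.+1 <= j < m.+2) bernstein m.+1 j)^`() = m.+1%:R *: bernstein m k.
Proof.
move=> km.
rewrite (big_morph _ (@derivD _) (@deriv0 _)) big_add1 /=.
under eq_bigr => i _ do rewrite deriv_bernsteinS.
rewrite -scaler_sumr; congr (_ *: _).
have top0 : bernstein m m.+1 = 0 by rewrite /bernstein bin_small // scale0r.
have := @telescope_sumr _ k m.+1 (fun i => - bernstein m i) (leqW km).
rewrite top0 oppr0 sub0r opprK => <-.
by apply: eq_bigr => i _; rewrite opprK addrC.
Qed.

(* The index  [m g]  at which the tail defining  phi_{m+1,g}  starts. *)
Definition tail_index (m : nat) (g : R) : nat := `|Num.floor (m%:R * g)|%N.

Lemma natr_absz_floor (x : R) : 0 <= x ->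
  (`|Num.floor x|%N)%:R = (Num.floor x)%:~R :> R.
Proof.
by move=> x0; rewrite -[(`|_|%N)%:R]/((Posz `|_|%N)%:~R) gez0_abs // floor_ge0.
Qed.

Lemma tail_index_le m g : 0 <= g <= 1 -> (tail_index m g <= m)%N.
Proof.
move=> /andP[g0 g1]; rewrite /tail_index -(ler_nat R) natr_absz_floor ?mulr_ge0 //.
by apply: le_trans (floor_le _) _; rewrite ler_piMr.
Qed.

Lemma phi_tail m g : 0 <= g <= 1 ->
  phi m.+1 g = horner (\sum_((tail_index m g).+1 <= j < m.+2) bernstein m.+1 j).
Proof.
move=> hg; apply/funext => t.
have hk := tail_index_le m hg.
have f0 : 0 <= Num.floor (m%:R * g).
  by case/andP: hg => g0 _; rewrite floor_ge0 mulr_ge0.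
rewrite /phi horner_sum mulrSr addrK -(gez0_abs f0) -/(tail_index m g).
rewrite big_mkcond (@big_cat_nat _ _ _ (tail_index m g).+1) //=; last first.
  by rewrite ltnS ltnW.
rewrite big_nat_cond big1 ?add0r; last first.
  by move=> i /andP[/andP[_ hi] _]; rewrite ltz_nat ltnNge -ltnS hi.
by apply: eq_big_nat => i /andP[hi _]; rewrite ltz_nat hi horner_bernstein.
Qed.

Lemma derive1_phi_mix p m (alpha : 'I_p -> R) (gam : 'I_p -> nat -> R) :
  (forall i, 0 <= gam i m.+1 <= 1) ->
  derive1 (phi_mix m.+1 alpha gam) =
  horner (\sum_(i < p) alpha i *:
            (m.+1%:R *: bernstein m (tail_index m (gam i m.+1)))).
Proof.
move=> hg.
have -> : phi_mix m.+1 alpha gam = horner (\sum_(i < p) alpha i *: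
     \sum_((tail_index m (gam i m.+1)).+1 <= j < m.+2) bernstein m.+1 j).
  apply/funext => u; rewrite /phi_mix horner_sum; apply: eq_bigr => i _.
  by rewrite hornerZ phi_tail.
rewrite -derivE (big_morph _ (@derivD _) (@deriv0 _)); congr horner.
by apply: eq_bigr => i _; rewrite derivZ deriv_bernstein_tail // tail_index_le.
Qed.

End BernsteinTail.

Section PolyConvexity.
Variable R : realType.

Lemma derive1_horner (F : {poly R}) : 'D_1 (horner F) = horner F^`().
Proof. by apply/funext => z; rewrite -derive1E -derivE. Qed.

Lemma poly_convex (F : {poly R}) a b :
  (forall z, a < z < b -> 0 <= (F^`()^`()).[z]) -> convex_on a b (horner F).
Proof.
move=> F2ge0.
have ordered : forall u v (c : {i01 R}), a <= u -> v <= b -> u <= v ->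
    (horner F : R -> R^o) (conv c (u : R^o) (v : R^o))
      <= conv c (F.[u] : R^o) (F.[v] : R^o).
  move=> u v c au vb uv; apply: second_derivative_convex => //.
  - move=> z /andP[uz zv]; rewrite -derive1E derive1_horner -derivE.
    by apply: F2ge0; rewrite (le_lt_trans au uz) (lt_le_trans zv vb).
  - exact: cvg_at_left_filter (@continuous_horner _ F v).
  - exact: cvg_at_right_filter (@continuous_horner _ F u).
  - by move=> z _; rewrite derive1_horner; exact: derivable_horner.
move=> x y s /andP[ax xb] /andP[ay yb] /andP[s0 s1].
have [xy|yx] := leP x y.
  by have := ordered x y (Itv01 s0 s1) ax yb xy; rewrite !convRE.
have s0' : 0 <= 1 - s by rewrite subr_ge0.
have s1' : 1 - s <= 1 by rewrite lerBlDr lerDl.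
have := ordered y x (Itv01 s0' s1') ay xb (ltW yx); rewrite !convRE /= /unstable.onem.
have -> : 1 - (1 - s) = s by ring.
by rewrite addrC [X in _ <= X]addrC.
Qed.

Lemma monomial_ode k l : let P : {poly R} := 'X^k * (1 - 'X) ^+ l in
  'X * (1 - 'X) * P^`() = (k%:R *: (1 - 'X) - l%:R *: 'X) * P.
Proof.
move=> P; rewrite /P derivM; clear P.
have eX : 'X * ('X^k)^`() = k%:R *: ('X^k : {poly R}).
  case: k => [|k]; first by rewrite derivXn mulr0n mulr0 scale0r.
  by rewrite derivXn mulrnAr -exprS scaler_nat.
have e1X : (1 - 'X) * ((1 - 'X) ^+ l)^`() = - (l%:R *: ((1 - 'X) ^+ l : {poly R})).
  case: l => [|l]; first by rewrite deriv_exp mulr0n mulr0 scale0r oppr0.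
  rewrite deriv_exp derivB derivC derivX sub0r mulN1r mulNrn mulrN mulrnAr -exprS.
  by rewrite scaler_nat.
set A := ('X^k)^`() in eX *; set B := ((1 - 'X) ^+ l)^`() in e1X *.
transitivity ((1 - 'X) * (1 - 'X) ^+ l * ('X * A) + 'X * 'X^k * ((1 - 'X) * B)).
  by ring.
rewrite eX e1X -!mul_polyC; ring.
Qed.

(* Convexity criterion for a single Bernstein monomial: with n = k + l,
   t^2 (1-t)^2 P''(t) = P(t) ((k - n t)^2 - k (1-t)^2 - l t^2),
   so P''(t) >= 0 as soon as  (k - n t)^2 >= n. *)
Lemma monomial_deriv2_ge0 k l t : 0 < t < 1 ->
  (k + l)%:R <= (k%:R - (k + l)%:R * t) ^+ 2 ->
  0 <= ((('X^k * (1 - 'X) ^+ l : {poly R})^`())^`()).[t].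
Proof.
move=> /andP[t0 t1] hq.
have ode := monomial_ode k l; simpl in ode.
set P := ('X^k * (1 - 'X) ^+ l : {poly R}) in ode *.
have hE : P.[t] = t ^+ k * (1 - t) ^+ l by rewrite /P !hornerE.
clearbody P.
have ode1 := congr1 (horner^~ t) ode.
have ode2 := congr1 (horner^~ t) (congr1 (@deriv R) ode).
rewrite !(derivM, derivB, derivZ, derivX, derivC) in ode2.
rewrite !hornerE /= in ode1 ode2.
set E := P.[t] in ode1 ode2 hE *; set E1 := P^`().[t] in ode1 ode2 *.
set E2 := (P^`())^`().[t] in ode2 *.
rewrite natrD in hq.
set K := k%:R in ode1 ode2 hq *; set L := l%:R in ode1 ode2 hq *.
have K0 : 0 <= K by rewrite /K ler0n.
have L0 : 0 <= L by rewrite /L ler0n.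
(* Multiply the differentiated equation by t(1-t) and eliminate P'(t)
   with the equation itself. *)
have ode2' := congr1 (fun z => t * (1 - t) * z) ode2; simpl in ode2'.
have ode1' := congr1 (fun z => ((K * (1 - t) - L * t) - (1 - 2 * t)) * z) ode1.
simpl in ode1'.
have key : t ^+ 2 * (1 - t) ^+ 2 * E2 =
    E * ((K - (K + L) * t) ^+ 2 - K * (1 - t) ^+ 2 - L * t ^+ 2).
  by rewrite !expr2; lra.
have E0 : 0 <= E by rewrite hE; apply: mulr_ge0; apply: exprn_ge0; lra.
have pos : 0 < t ^+ 2 * (1 - t) ^+ 2 by apply: mulr_gt0; apply: exprn_gt0; lra.
rewrite -(pmulr_rge0 _ pos) key; apply: mulr_ge0 => //.
have K_shrinks : K * (1 - t) ^+ 2 <= K.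
  by rewrite expr2 -[X in _ <= X]mulr1; apply: ler_wpM2l => //; nra.
have L_shrinks : L * t ^+ 2 <= L.
  by rewrite expr2 -[X in _ <= X]mulr1; apply: ler_wpM2l => //; nra.
lra.
Qed.

Lemma mixture_convex p m (alpha : 'I_p -> R) (ks : 'I_p -> nat) a b :
  (forall i, 0 <= alpha i) -> (forall i, ks i <= m)%N ->
  (forall z, a < z < b -> 0 < z < 1 /\
     forall i, m%:R <= ((ks i)%:R - m%:R * z) ^+ 2) ->
  convex_on a b (horner (\sum_(i < p) alpha i *: (m.+1%:R *: bernstein R m (ks i)))).
Proof.
move=> alpha0 ksm hz; apply: poly_convex => z /hz [z01 far].
rewrite !(big_morph _ (@derivD _) (@deriv0 _)) horner_sum.
apply: sumr_ge0 => i _; rewrite /bernstein !derivZ !hornerZ.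
rewrite !mulr_ge0 ?ler0n //; apply: monomial_deriv2_ge0 => //.
by rewrite subnKC.
Qed.

End PolyConvexity.

Section Asymptotics.
Variable R : realType.

(* Since  [m g'] = m g' + O(1), the index stays away from  m t  by roughly
   m |t - g|, up to the error  m |g' - g|. *)
Lemma tail_index_far m (g' g t : R) : 0 <= g' ->
  m%:R * `|t - g| - m%:R * `|g' - g| - 1 <= `|(tail_index m g')%:R - m%:R * t|.
Proof.
move=> g'0.
have /andP[lo hi] := floor_itv (m%:R * g').
rewrite intrD -natr_absz_floor ?mulr_ge0 // -/(tail_index m g') in lo hi.
set k := (tail_index m g')%:R in lo hi *.
have near_k : `|k - m%:R * g'| <= 1 by rewrite ler_norml; apply/andP; split; lra.
have scale x : m%:R * `|x| = `|m%:R * x| by rewrite normrM ger0_norm.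
have -> : m%:R * `|t - g| = `|(m%:R * t - k) + (k - m%:R * g') + m%:R * (g' - g)|.
  by rewrite scale; congr `|_|; ring.
rewrite scale.
have := ler_normD (m%:R * t - k + (k - m%:R * g')) (m%:R * (g' - g)).
have := ler_normD (m%:R * t - k) (k - m%:R * g').
rewrite distrC; lra.
Qed.

Lemma eventually_sqr_ge (c eps : R) : 0 <= c -> 0 < eps ->
  exists N : nat, forall m : nat, (N <= m)%N ->
    forall x : R, m%:R * eps - c <= x -> m%:R <= x ^+ 2.
Proof.
move=> c0 e0.
set A := 2 * c / eps; set B := 4 / (eps * eps).
have A0 : 0 <= A by rewrite /A divr_ge0 // ?mulr_ge0 // ltW.
have B0 : 0 <= B by rewrite /B divr_ge0 // mulr_ge0 // ltW.
have hA : A * eps = 2 * c by rewrite /A divfK // gt_eqF.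
have hB : B * (eps * eps) = 4 by rewrite /B divfK // gt_eqF // mulr_gt0.
exists (Num.Def.archi_bound (A + B)) => m hm x hx.
have mAB : A + B < m%:R.
  by apply: lt_le_trans (archi_boundP (addr_ge0 A0 B0)) _; rewrite ler_nat.
have m0 : 0 <= m%:R :> R by rewrite ler0n.
have m_eps : 2 * c <= m%:R * eps by rewrite -hA ler_wpM2r ?ltW //; lra.
have m_eps2 : 4 <= m%:R * (eps * eps).
  by rewrite -hB ler_wpM2r ?mulr_ge0 ?ltW //; lra.
set w := m%:R * eps / 2.
have wx : w <= x by rewrite /w; lra.
have ww : m%:R <= w * w.
  have -> : w * w = m%:R * (m%:R * (eps * eps)) / 4 by rewrite /w; field.
  by rewrite ler_pdivlMr //; nra.
have w0 : 0 <= w by rewrite /w divr_ge0 // mulr_ge0 // ltW.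
by rewrite expr2; nra.
Qed.

Lemma tail_index_sep (gn : nat -> R) (g eps : R) : 0 < eps ->
  (forall n, 0 <= gn n <= 1) ->
  (exists (C : R) (N0 : nat), forall n : nat, (N0 <= n)%N -> `|gn n - g| <= C / n%:R) ->
  exists N : nat, forall m : nat, (N <= m)%N -> forall t : R, eps <= `|t - g| ->
    m%:R <= ((tail_index m (gn m.+1))%:R - m%:R * t) ^+ 2.
Proof.
move=> e0 gn01 [C [N0 HC]].
have [N HN] := @eventually_sqr_ge (`|C| + 1) eps (addr_ge0 (normr_ge0 C) ler01) e0.
exists (N + N0)%N => m hm t ht.
have mN : (N <= m)%N by apply: leq_trans hm; rewrite leq_addr.
have err : m%:R * `|gn m.+1 - g| <= `|C|.
  have : `|gn m.+1 - g| * m.+1%:R <= `|C|.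
    rewrite -ler_pdivlMr ?ltr0n //; apply: le_trans (HC _ _) _.
      exact: leq_trans (leq_addl N N0) (leq_trans hm (leqnSn m)).
    by rewrite ler_pM2r ?invr_gt0 ?ltr0n // ler_norm.
  have := normr_ge0 (gn m.+1 - g); rewrite -natr1; nra.
rewrite -real_normK ?num_real //; apply: (HN _ mN).
have := tail_index_far m g t (proj1 (andP (gn01 m.+1))).
have : m%:R * eps <= m%:R * `|t - g| by rewrite ler_wpM2l ?ler0n.
lra.
Qed.

Lemma gap_far p (gamma : 'I_p -> R) (s : nat) (a b eps : R) :
  (forall l : 'I_p, (l < s)%N -> gamma l + eps <= a) ->
  (forall l : 'I_p, (s <= l)%N -> b <= gamma l - eps) ->
  forall z, a < z < b -> forall l, eps <= `|z - gamma l|.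
Proof.
move=> below above z /andP[az zb] l; rewrite ler_normr.
case: (ltnP l s) => ls; apply/orP.
  by left; have := below l ls; lra.
by right; have := above l ls; lra.
Qed.

End Asymptotics.

Theorem lemma5p3 (R : realType) (p : nat) (gamma : 'I_p -> R)
    (alpha : 'I_p -> R) (gam : 'I_p -> nat -> R) :
  (forall i, 0 <= gamma i <= 1) ->
  (forall i j : 'I_p, (i < j)%N -> gamma i < gamma j) ->
  (forall i, 0 < alpha i < 1) ->
  \sum_(i < p) alpha i = 1 ->
  (forall i n, 0 <= gam i n <= 1) ->
  (forall i, exists (C : R) (N0 : nat), forall n : nat, (N0 <= n)%N ->
       `|gam i n - gamma i| <= C / n%:R) ->
  forall eps : R, 0 < eps ->
  exists N : nat, forall n : nat, (N <= n)%N ->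
    let f := derive1 (phi_mix n alpha gam) in
    (forall i0 : 'I_p, (i0 : nat) = 0%N -> convex_on (0 : R) (gamma i0 - eps) f) /\
    (forall i j : 'I_p, j = i.+1 :> nat ->
       convex_on (gamma i + eps) (gamma j - eps) f) /\
    (forall ip : 'I_p, (ip : nat) = p.-1 -> convex_on (gamma ip + eps) 1 f).
Proof.
move=> gamma01 gamma_lt alpha01 _ gam01 gamO eps e0.
have gamma_le (i j : 'I_p) : (i <= j)%N -> gamma i <= gamma j.
  by rewrite leq_eqVlt => /orP[/eqP/val_inj-> // | /gamma_lt/ltW].
have [Nf HN] := fin_all_exists (fun i => tail_index_sep e0 (gam01 i) (gamO i)).
exists (\max_(i < p) Nf i).+1 => -[//|m] hm f.
have convex_gap a b (s : nat) : 0 <= a -> b <= 1 ->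
    (forall l : 'I_p, (l < s)%N -> gamma l + eps <= a) ->
    (forall l : 'I_p, (s <= l)%N -> b <= gamma l - eps) -> convex_on a b f.
  move=> a0 b1 below above; rewrite /f derive1_phi_mix //.
  apply: mixture_convex => [i|i|z zab]; first by case/andP: (alpha01 i) => /ltW.
    exact: tail_index_le.
  split; first by case/andP: zab => az zb; apply/andP; split; lra.
  move=> i; apply: (HN i m _ z (gap_far below above zab i)).
  exact: leq_trans (leq_bigmax i) hm.
have gamma_ge0 i : 0 <= gamma i by case/andP: (gamma01 i).
have gamma_le1 i : gamma i <= 1 by case/andP: (gamma01 i).
split; [|split].
- move=> i0 i00; apply: (convex_gap _ _ 0) => // [|l _].
    by have := gamma_le1 i0; lra.
  by rewrite lerD2r gamma_le // i00.
- move=> i j ji; apply: (convex_gap _ _ j) => [||l|l].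
  + by have := gamma_ge0 i; lra.
  + by have := gamma_le1 j; lra.
  + by rewrite ji ltnS => /gamma_le; lra.
  + by move=> /gamma_le; lra.
- move=> ip ipE; apply: (convex_gap _ _ p) => // [|l|l].
  + by have := gamma_ge0 ip; lra.
  + move=> _; have : gamma l <= gamma ip.
      by rewrite gamma_le // ipE -ltnS prednK // (leq_ltn_trans _ (ltn_ord l)).
    lra.
  + by rewrite leqNgt ltn_ord.
Qed.
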